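(* Let $\lambda\in\mathbb{R}$, let $n$ be a positive integer and let $k$ be a positive integer. Then \[ S_{k,\lambda}(n)=\frac{n\,(n+1)_{k,\lambda}}{k+1}-\frac{1}{k+1}\sum_{r=1}^{k-1}(1)_{k+1-r,\lambda}\binom{k}{r-1}S_{r,\lambda}(n)-\frac{\lambda}{k+1}\sum_{r=1}^{k-1}r\binom{k}{r}(1)_{k-r,\lambda}\,S_{r,\lambda}(n). \]
   Context: For $\lambda\in\mathbb{R}$ the degenerate falling factorials are $(x)_{0,\lambda}=1$ and $(x)_{m,\lambda}=x(x-\lambda)(x-2\lambda)\cdots(x-(m-1)\lambda)$ for $m\ge 1$. For positive integers $r,n$, $S_{r,\lambda}(n)=\sum_{j=1}^{n}(j)_{r,\lambda}=(1)_{r,\lambda}+(2)_{r,\lambda}+\cdots+(n)_{r,\lambda}$. *)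

From Stdlib Require Import Reals.
Open Scope R_scope.

Fixpoint dff (lam x : R) (m : nat) : R :=
  match m with
  | O => 1
  | S m' => dff lam x m' * (x - INR m' * lam)
  end.

(* sumR a b f = f a + f (a+1) + ... + f b  (0 if b < a) *)
Fixpoint sumR_aux (a : nat) (len : nat) (f : nat -> R) : R :=
  match len with
  | O => 0
  | S l => sumR_aux a l f + f (a + l)%nat
  end.
Definition sumR (a b : nat) (f : nat -> R) : R := sumR_aux a (S b - a) f.

Definition Sdeg (lam : R) (r n : nat) : R := sumR 1 n (fun j => dff lam (INR j) r).

(* The degenerate binomial theorem (x + 1)_k = sum_r C(k,r) (x)_r (1)_(k-r), together with
   x (x)_r = (x)_(r+1) + r lam (x)_r, expresses x (x + 1)_k - (x - 1) (x)_k as (k + 1) (x)_k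
   plus a combination of the (x)_r with 0 < r < k.  Summing over x = 1, ..., n, the left side
   telescopes to n (n + 1)_k and the right side becomes (k + 1) S_k(n) plus the same
   combination of the S_r(n). *)

From Stdlib Require Import Reals Lra Lia.
Open Scope R_scope.

Lemma sumR_aux_ext a l f g :
  (forall i, (i < l)%nat -> f (a + i)%nat = g (a + i)%nat) ->
  sumR_aux a l f = sumR_aux a l g.
Proof.
  induction l as [|l IH]; intros Hfg; simpl; [reflexivity|].
  rewrite IH, Hfg; [reflexivity | lia | intros i Hi; apply Hfg; lia].
Qed.

Lemma sumR_aux_plus a l f g :
  sumR_aux a l (fun i => f i + g i) = sumR_aux a l f + sumR_aux a l g.
Proof. induction l as [|l IH]; simpl; [ring|rewrite IH; ring]. Qed.

Lemma sumR_aux_scal a l c f :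
  sumR_aux a l (fun i => c * f i) = c * sumR_aux a l f.
Proof. induction l as [|l IH]; simpl; [ring|rewrite IH; ring]. Qed.

Lemma sumR_aux_shift a l f :
  sumR_aux (S a) l f = sumR_aux a l (fun i => f (S i)).
Proof. induction l as [|l IH]; simpl; [reflexivity|rewrite IH; reflexivity]. Qed.

Lemma sumR_aux_first a l f : sumR_aux a (S l) f = f a + sumR_aux (S a) l f.
Proof.
  induction l as [|l IH]; simpl in *.
  - rewrite Nat.add_0_r; ring.
  - rewrite IH, Nat.add_succ_r; ring.
Qed.

Lemma sumR_aux_swap a l b m (f : nat -> nat -> R) :
  sumR_aux a l (fun i => sumR_aux b m (f i)) =
  sumR_aux b m (fun j => sumR_aux a l (fun i => f i j)).
Proof.
  induction l as [|l IH]; simpl.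
  - induction m as [|m IHm]; simpl; [reflexivity|rewrite <- IHm; ring].
  - rewrite IH, <- sumR_aux_plus; reflexivity.
Qed.

Lemma sumR_aux_telescope a l (F : nat -> R) :
  sumR_aux a l (fun i => F (S i) - F i) = F (a + l)%nat - F a.
Proof.
  induction l as [|l IH]; simpl.
  - rewrite Nat.add_0_r; ring.
  - rewrite IH, Nat.add_succ_r; ring.
Qed.

Lemma sumR_1 b f : sumR 1 b f = sumR_aux 1 b f.
Proof. unfold sumR; rewrite Nat.sub_succ, Nat.sub_0_r; reflexivity. Qed.

Lemma sumR_0 b f : sumR 0 b f = sumR_aux 0 (S b) f.
Proof. reflexivity. Qed.

Lemma C_n_0 n : Binomial.C n 0 = 1.
Proof.
  unfold Binomial.C; rewrite Nat.sub_0_r; simpl.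
  field; apply INR_fact_neq_0.
Qed.

Lemma C_n_n n : Binomial.C n n = 1.
Proof.
  unfold Binomial.C; rewrite Nat.sub_diag; simpl.
  field; apply INR_fact_neq_0.
Qed.

Lemma C_Sn_n n : Binomial.C (S n) n = INR (S n).
Proof.
  unfold Binomial.C; rewrite Nat.sub_succ_l, Nat.sub_diag by lia; simpl (Factorial.fact 1).
  rewrite fact_simpl, mult_INR; simpl (INR 1).
  field; apply INR_fact_neq_0.
Qed.

Lemma dff_binomial lam x y m :
  dff lam (x + y) m =
  sumR 0 m (fun r => Binomial.C m r * dff lam x r * dff lam y (m - r)).
Proof.
  rewrite sumR_0; induction m as [|m IH].
  - simpl; rewrite C_n_0; ring.
  - cbn [dff]; rewrite IH, Rmult_comm, <- sumR_aux_scal.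
    rewrite (sumR_aux_ext 0 (S m) _ (fun r =>
      Binomial.C m r * dff lam x (S r) * dff lam y (m - r)
      + Binomial.C m r * dff lam x r * dff lam y (S m - r))).
    2:{ intros r Hr; simpl (0 + r)%nat.
        rewrite Nat.sub_succ_l by lia; cbn [dff]; rewrite minus_INR by lia; ring. }
    rewrite sumR_aux_plus.
    (* [Binomial.C m (S m)] is 1/(m+1), not 0, so the extreme terms are split off
       before Pascal's rule is applied to the middle ones. *)
    rewrite (sumR_aux_first 0 m (fun r => Binomial.C m r * dff lam x r * dff lam y (S m - r))).
    rewrite (sumR_aux_first 0 (S m)), !sumR_aux_shift.
    cbn [sumR_aux Nat.add Nat.sub].
    rewrite (sumR_aux_ext 0 m (fun r => Binomial.C (S m) (S r) * dff lam x (S r) * dff lam y (m - r))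
      (fun r => Binomial.C m r * dff lam x (S r) * dff lam y (m - r)
        + Binomial.C m (S r) * dff lam x (S r) * dff lam y (m - r))).
    2:{ intros r Hr; rewrite <- Binomial.pascal by lia; ring. }
    rewrite sumR_aux_plus, !C_n_0, !C_n_n, Nat.sub_diag; cbn [dff]; ring.
Qed.

Lemma dff_step_identity lam k x :
  x * dff lam (x + 1) k - (x - 1) * dff lam x k =
  (INR k + 1) * dff lam x k
  + sumR 1 (k - 1) (fun r => dff lam 1 (k + 1 - r) * Binomial.C k (r - 1) * dff lam x r)
  + lam * sumR 1 (k - 1) (fun r => INR r * Binomial.C k r * dff lam 1 (k - r) * dff lam x r).
Proof.
  destruct k as [|m]; [rewrite !sumR_1; simpl; ring|].
  rewrite dff_binomial, sumR_0, !sumR_1, Nat.sub_succ, Nat.sub_0_r, <- sumR_aux_scal.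
  rewrite (sumR_aux_ext 0 (S (S m)) _ (fun r =>
    Binomial.C (S m) r * dff lam 1 (S m - r) * dff lam x (S r)
    + lam * (INR r * Binomial.C (S m) r * dff lam 1 (S m - r) * dff lam x r))).
  2:{ intros r _; cbn [dff]; ring. }
  rewrite sumR_aux_plus, sumR_aux_scal.
  rewrite (sumR_aux_first 0 (S m) (fun r => INR r * _ * _ * _)).
  rewrite (sumR_aux_shift 0 m (fun r => dff lam 1 (S m + 1 - r) * _ * _)).
  rewrite (sumR_aux_ext 0 m (fun r => dff lam 1 (S m + 1 - S r) * _ * _)
    (fun r => Binomial.C (S m) r * dff lam 1 (S m - r) * dff lam x (S r))).
  2:{ intros r Hr; simpl (0 + r)%nat.
      replace (S m + 1 - S r)%nat with (S m - r)%nat by lia.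
      rewrite Nat.sub_succ, Nat.sub_0_r; ring. }
  cbn [sumR_aux Nat.add].
  rewrite C_Sn_n, C_n_n, Nat.sub_succ_l, !Nat.sub_diag by lia.
  cbn [dff]; rewrite INR_0; ring.
Qed.

Lemma sum_dff_telescope lam k n :
  sumR 1 n (fun j => INR j * dff lam (INR j + 1) k - (INR j - 1) * dff lam (INR j) k) =
  INR n * dff lam (INR n + 1) k.
Proof.
  set (F i := (INR i - 1) * dff lam (INR i) k).
  rewrite sumR_1, (sumR_aux_ext 1 n _ (fun j => F (S j) - F j)).
  - rewrite sumR_aux_telescope; unfold F; rewrite S_INR; simpl (INR 1); ring.
  - intros j _; unfold F; simpl (1 + j)%nat; rewrite !S_INR; ring.
Qed.

Lemma sumR_Sdeg lam n a b (c : nat -> R) :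
  sumR 1 n (fun j => sumR a b (fun r => c r * dff lam (INR j) r)) =
  sumR a b (fun r => c r * Sdeg lam r n).
Proof.
  unfold Sdeg, sumR; rewrite sumR_aux_swap.
  apply sumR_aux_ext; intros r _; apply sumR_aux_scal.
Qed.

Lemma sum_dff_step_identity lam k n :
  INR n * dff lam (INR n + 1) k =
  (INR k + 1) * Sdeg lam k n
  + sumR 1 (k - 1) (fun r => dff lam 1 (k + 1 - r) * Binomial.C k (r - 1) * Sdeg lam r n)
  + lam * sumR 1 (k - 1) (fun r => INR r * Binomial.C k r * dff lam 1 (k - r) * Sdeg lam r n).
Proof.
  rewrite <- sum_dff_telescope, <- !sumR_Sdeg.
  unfold Sdeg, sumR; rewrite <- !sumR_aux_scal, <- !sumR_aux_plus.
  apply sumR_aux_ext; intros j _; apply dff_step_identity.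
Qed.

Theorem theorem3p2 (lam : R) (n k : nat) (hn : (1 <= n)%nat) (hk : (1 <= k)%nat) :
  Sdeg lam k n =
    INR n * dff lam (INR n + 1) k / (INR k + 1)
    - / (INR k + 1) * sumR 1 (k - 1)
        (fun r => dff lam 1 (k + 1 - r) * Binomial.C k (r - 1) * Sdeg lam r n)
    - lam / (INR k + 1) * sumR 1 (k - 1)
        (fun r => INR r * Binomial.C k r * dff lam 1 (k - r) * Sdeg lam r n).
Proof.
  rewrite sum_dff_step_identity.
  field; pose proof (pos_INR k); lra.
Qed.
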